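(* Let $\mathfrak{W}$ be the Witt algebra and let $\bigwedge^2\mathfrak{W}$ carry the $\mathfrak{W}$-module structure induced by the adjoint action. Then the first Chevalley–Eilenberg cohomology vanishes: $$H^1\big(\mathfrak{W},\textstyle\bigwedge^2\mathfrak{W}\big)=\{0\}.$$ Equivalently: for every linear map $\delta:\mathfrak{W}\to\bigwedge^2\mathfrak{W}$ satisfying $$\delta([x,y]) = x\cdot\delta(y) - y\cdot\delta(x)\quad\text{for all } x,y\in\mathfrak{W},$$ there exists $r\in\bigwedge^2\mathfrak{W}$ such that $\delta(x)=x\cdot r$ for all $x\in\mathfrak{W}$.
   Context: The Witt algebra $\mathfrak{W}$ is the complex Lie algebra with basis $\{L_m : m\in\mathbb{Z}\}$ (elements are finite linear combinations) and bracket $[L_m,L_n]=(m-n)L_{m+n}$. The exterior square $\bigwedge^2\mathfrak{W}$ (finite sums of elements $a\wedge b = a\otimes b - b\otimes a$) is a $\mathfrak{W}$-module via $x\cdot(a\wedge b)=[x,a]\wedge b + a\wedge[x,b]$, i.e. $x\cdot t=[x\otimes 1+1\otimes x,\,t]$. A 1-cocycle is a linear map $\delta:\mathfrak{W}\to\bigwedge^2\mathfrak{W}$ with $\delta([x,y])=x\cdot\delta(y)-y\cdot\delta(x)$; a 1-coboundary is a map of the form $x\mapsto x\cdot r$ for a fixed $r\in\bigwedge^2\mathfrak{W}$; $H^1$ is the quotient of 1-cocycles by 1-coboundaries. *)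

From HB Require Import structures.
From mathcomp Require Import all_boot all_order all_algebra.
From mathcomp Require Import finmap.
From mathcomp Require Import monalg.
From mathcomp Require Import complex.
From mathcomp Require Import Rstruct.

Set Implicit Arguments.
Unset Strict Implicit.
Unset Printing Implicit Defensive.

Import GRing.Theory.
Local Open Scope ring_scope.

Definition CC : fieldType := complex Rdefinitions.R.

(* The Witt algebra as a vector space: finite C-linear combinations of the
   basis vectors L_m, m in Z (finitely supported functions Z -> C). *)
Definition Witt := {malg CC[int]}.

(* W (x) W : finite linear combinations of L_m (x) L_n. *)
Definition Tens := {malg CC[(int * int)%type]}.

Definition L (m : int) : Witt := << m >>.

Definition bracket (x y : Witt) : Witt :=
  \sum_(m <- msupp x) \sum_(n <- msupp y)
     ((x@_m * y@_n) * (m - n)%:~R) *: L (m + n).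

Definition tensor (a b : Witt) : Tens :=
  \sum_(m <- msupp a) \sum_(n <- msupp b) << (a@_m * b@_n) *g (m, n) >>.

Definition wedge (a b : Witt) : Tens := tensor a b - tensor b a.

Definition in_ext2 (t : Tens) : Prop :=
  exists s : seq (Witt * Witt), t = \sum_(p <- s) wedge p.1 p.2.

(* The W-action x . t = [x (x) 1 + 1 (x) x, t], i.e. the linear extension of
   x . (a (x) b) = [x,a] (x) b + a (x) [x,b]. *)
Definition act (x : Witt) (t : Tens) : Tens :=
  \sum_(p <- msupp t)
     t@_p *: (tensor (bracket x (L p.1)) (L p.2)
              + tensor (L p.1) (bracket x (L p.2))).

(* A 1-cochain is recorded by the coefficient functions [D m] of delta(L_m) on
   the basis L_i (x) L_j, on which L_m acts by [actL]; since delta takes values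
   in /\^2 W these functions are antisymmetric.  Subtracting coboundaries, one
   first makes delta(L_0) vanish (off the diagonal i + j = 0 by dividing by the
   weight, on it because L_1 has trivial kernel there) and then delta(L_1), by
   solving a recursion along the weight-zero diagonal.  A cocycle vanishing on
   L_0 and L_1 is homogeneous; its L_(-1) part lies in the one-dimensional
   weight -1 kernel of L_1 and is killed by a few cocycle identities involving
   L_2 and L_(-2), whose parts then lie in trivial kernels of L_(-1) and L_1;
   induction does the rest, the negative side being the image of the positive
   one under the automorphism L_m |-> - L_(-m).  Finally the primitive is
   finitely supported because L_0, L_1 and L_2 map it to finitely supported
   functions, so it is the coefficient function of an element of /\^2 W. *)

From HB Require Import structures.
From mathcomp Require Import all_boot all_order all_algebra.
From mathcomp Require Import finmap monalg complex Rstruct.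
From mathcomp Require Import ring zify.

Set Implicit Arguments.
Unset Strict Implicit.
Unset Printing Implicit Defensive.

Import GRing.Theory Num.Theory.
Local Open Scope ring_scope.

(* Elements of W (x) W are handled through their coefficient functions on the
   basis L_i (x) L_j. *)
Local Notation tcoef := (int * int -> CC).

Lemma intr_mul_eq0 (k : int) (x : CC) : k != 0 -> k%:~R * x = 0 -> x = 0.
Proof. by rewrite -(intr_eq0 CC) => /negbTE k0 /eqP; rewrite mulf_eq0 k0 => /eqP. Qed.

Lemma eq_of_scaled_sub (k : int) (x y a b : CC) :
  k != 0 -> a = b -> k%:~R * (x - y) = a - b -> x = y.
Proof.
by move=> k0 -> /eqP; rewrite subrr => /eqP /(intr_mul_eq0 k0) /eqP; rewrite subr_eq0 => /eqP.
Qed.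

Lemma int_ind_ge (P : int -> Prop) (k : int) :
  P k -> (forall i, k < i -> P (i - 1) -> P i) -> forall i, k <= i -> P i.
Proof.
move=> Pk PS i ki; have [n ->] : exists n : nat, i = k + n%:Z by exists `|i - k|%N; lia.
elim: n => [|n IH]; first by rewrite addr0.
by apply: PS; [lia | rewrite (_ : _ - 1 = k + n%:Z) //; lia].
Qed.

(* The coefficients of L_m . t in terms of those of t: since
   [L_m, L_(i-m)] = (2m - i) L_i, only (i - m, j) and (i, j - m) contribute
   to the coefficient of L_i (x) L_j. *)
Definition actL (m : int) (f : tcoef) (p : int * int) : CC :=
  (2 * m - p.1)%:~R * f (p.1 - m, p.2) + (2 * m - p.2)%:~R * f (p.1, p.2 - m).

Definition antisym (f : tcoef) := forall i j, f (i, j) = - f (j, i).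

Definition homog (d : int) (f : tcoef) := forall p, p.1 + p.2 != d -> f p = 0.

Definition cocycle (D : int -> tcoef) := forall m n p,
  (m - n)%:~R * D (m + n) p = actL m (D n) p - actL n (D m) p.

Definition subcob (D : int -> tcoef) (R : tcoef) (m : int) (p : int * int) :=
  D m p - actL m R p.

Lemma actL_ext m (f g : tcoef) : f =1 g -> actL m f =1 actL m g.
Proof. by move=> fg p; rewrite /actL !fg. Qed.

Lemma actL_eq0 m (f : tcoef) : f =1 \0 -> actL m f =1 \0.
Proof. by move=> f0 p; rewrite (actL_ext _ f0) /actL !mulr0 addr0. Qed.

Lemma actLD m (f g : tcoef) p :
  actL m (fun q => f q + g q) p = actL m f p + actL m g p.
Proof. by rewrite /actL; ring. Qed.

Lemma actLB m (f g : tcoef) p :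
  actL m (fun q => f q - g q) p = actL m f p - actL m g p.
Proof. by rewrite /actL; ring. Qed.

Lemma actL0 (f : tcoef) p : actL 0 f p = - (p.1 + p.2)%:~R * f p.
Proof. by case: p => i j; rewrite /actL /= !subr0 mulr0 !sub0r; ring. Qed.

Lemma actL_comm m n (f : tcoef) p :
  actL m (actL n f) p - actL n (actL m f) p = (m - n)%:~R * actL (m + n) f p.
Proof.
case: p => i j; rewrite /actL /=.
have shift a : a - m - n = a - (m + n) by lia.
have shift' a : a - n - m = a - (m + n) by lia.
rewrite !shift !shift'.
move: (f (i - (m + n), j)) (f (i - m, j - n)) (f (i - n, j - m)) (f (i, j - (m + n))).
by move=> a b c d; ring.
Qed.

Lemma homog_actL d m (f : tcoef) : homog d f -> homog (d + m) (actL m f).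
Proof.
move=> hf [i j] /= hij; rewrite /actL !hf ?mulr0 ?addr0 //=; lia.
Qed.

Lemma antisym_diag (f : tcoef) i : antisym f -> f (i, i) = 0.
Proof.
move=> af; apply: (@intr_mul_eq0 2) => //.
by rewrite -(subrr (f (i, i))) {3}af; ring.
Qed.

Lemma antisym_actL m (f : tcoef) : antisym f -> antisym (actL m f).
Proof. by move=> af i j; rewrite /actL /= af (af i); ring. Qed.

Lemma antisymD (f g : tcoef) :
  antisym f -> antisym g -> antisym (fun q => f q + g q).
Proof. by move=> af ag i j /=; rewrite af ag opprD. Qed.

Lemma cocycle_subcob (D : int -> tcoef) R : cocycle D -> cocycle (subcob D R).
Proof. by move=> cD m n p; rewrite /subcob mulrBr cD -actL_comm !actLB; ring. Qed.

Lemma antisym_subcob (D : int -> tcoef) R m :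
  antisym (D m) -> antisym R -> antisym (subcob D R m).
Proof. by move=> aD aR i j; rewrite /subcob aD (antisym_actL m aR i); ring. Qed.

Lemma cocycle_homog (D : int -> tcoef) : cocycle D -> D 0 =1 \0 ->
  forall m, homog m (D m).
Proof.
move=> cD D0 m [i j] /= hij.
have := cD m 0 (i, j); rewrite ?subr0 ?addr0 actL0 (actL_eq0 _ D0) sub0r /= => E.
apply: (@intr_mul_eq0 (m - (i + j))); first by rewrite subr_eq0 eq_sym.
by rewrite intrB mulrBl E; ring.
Qed.

Lemma antisym_homog_eq0 (f : tcoef) (d k : int) : antisym f -> homog d f ->
  2 * k <= d + 1 -> (forall i, k <= i -> f (i, d - i) = 0) -> f =1 \0.
Proof.
move=> af hf hk fk [i j] /=.
have [/eqP hij|hij] := boolP (i + j == d); last by rewrite hf.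
have -> : j = d - i by lia.
have [ki|ik] := lerP k i; first exact: fk.
rewrite af -[X in f (_, X)](_ : d - (d - i) = i); last by lia.
by rewrite fk ?oppr0 //; lia.
Qed.

(* On the line i + j = d + 1, L_1 gives
   (1 - d + i) f(i, d - i) = (i - 2) f(i - 1, d - i + 1), so vanishing
   propagates upwards from i = k as long as i <> d - 1. *)
Lemma actL1_ker_eq0 (f : tcoef) (d k : int) : antisym f -> homog d f ->
  actL 1 f =1 \0 -> 2 * k <= d + 1 -> d <= k + 1 -> f (k, d - k) = 0 ->
  f =1 \0.
Proof.
move=> af hf f1 hk hdk fk; apply: (antisym_homog_eq0 af hf hk).
apply: int_ind_ge => // i ki IH.
have := f1 (i, d + 1 - i); rewrite /actL /=.
rewrite (_ : (i - 1, d + 1 - i) = (i - 1, d - (i - 1))); last by congr pair; lia.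
rewrite IH mulr0 add0r (_ : d + 1 - i - 1 = d - i); last by lia.
by apply: intr_mul_eq0; lia.
Qed.

(* The automorphism L_m |-> - L_(-m) of the Witt algebra reverses all indices. *)
Definition reflc (f : tcoef) (p : int * int) := f (- p.1, - p.2).

Lemma antisym_reflc (f : tcoef) : antisym f -> antisym (reflc f).
Proof. by move=> af i j; rewrite /reflc af. Qed.

Lemma actL_reflc m (f : tcoef) p : actL m (reflc f) p = - actL (- m) f (- p.1, - p.2).
Proof.
case: p => i j; rewrite /actL /reflc /=.
have -> : - (i - m) = - i - - m by lia.
have -> : - (j - m) = - j - - m by lia.
ring.
Qed.

Lemma cocycle_reflc (D : int -> tcoef) : cocycle D -> cocycle (fun m => reflc (D (- m))).
Proof.
move=> cD m n [i j]; rewrite !actL_reflc /reflc /= opprD.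
transitivity (- ((- m - - n)%:~R * D (- m + - n) (- i, - j))); first by ring.
by rewrite cD; ring.
Qed.

Lemma cocycle_eq0_ge (e : int -> tcoef) : cocycle e ->
  e 1 =1 \0 -> e 2 =1 \0 -> forall m, 1 <= m -> e m =1 \0.
Proof.
move=> ce e1 e2; apply: int_ind_ge => // m hm IH.
have [->|m2] := eqVneq m 2; first exact: e2.
move=> p; have := ce (m - 1) 1 p; rewrite subrK (actL_eq0 _ e1) (actL_eq0 _ IH) subrr.
by apply: intr_mul_eq0; lia.
Qed.

Section Rigidity.

Variable e : int -> tcoef.
Hypotheses (ce : cocycle e) (ae : forall m, antisym (e m)).
Hypotheses (e0 : e 0 =1 \0) (e1 : e 1 =1 \0).

Lemma cocycle_eq0_m2 : e (-1) =1 \0 -> e (-2) =1 \0.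
Proof.
move=> em1; have hm2 := cocycle_homog ce e0 (m := -2).
apply: (@actL1_ker_eq0 _ (-2) (-1)) => //; last exact: antisym_diag.
move=> p; have E : 3%:~R * e (-1) p = actL 1 (e (-2)) p - actL (-2) (e 1) p := ce 1 (-2) p.
by move: E; rewrite em1 (actL_eq0 _ e1) /= mulr0 subr0.
Qed.

Lemma cocycle_ker1_m1 : actL 1 (e (-1)) =1 \0.
Proof.
move=> p; have E : 2%:~R * e 0 p = actL 1 (e (-1)) p - actL (-1) (e 1) p := ce 1 (-1) p.
by move: E; rewrite e0 (actL_eq0 _ e1) /= mulr0 subr0.
Qed.

(* The kernel of L_1 in weight -1 is spanned by L_1 /\ L_(-2) - 3 L_0 /\ L_(-1);
   the identities below force its coefficient [c] to vanish. *)
Lemma cocycle_eq0_m1 : e (-1) =1 \0.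
Proof.
have K1 : 1%:~R * e (-1) (0, -1) + 3%:~R * e (-1) (1, -2) = 0 := cocycle_ker1_m1 (1, -1).
have K2 : 0%:~R * e (-1) (1, -2) + 4%:~R * e (-1) (2, -3) = 0 := cocycle_ker1_m1 (2, -2).
have A1 : 3%:~R * e 1 (1, 0) = (3%:~R * e (-1) (-1, 0) + 4%:~R * e (-1) (1, -2))
  - ((-3)%:~R * e 2 (2, 0) + (-2)%:~R * e 2 (1, 1)) := ce 2 (-1) (1, 0).
have A2 : 3%:~R * e 1 (2, -1) = (2%:~R * e (-1) (0, -1) + 5%:~R * e (-1) (2, -3))
  - ((-4)%:~R * e 2 (3, -1) + (-1)%:~R * e 2 (2, 0)) := ce 2 (-1) (2, -1).
have B1 : 3%:~R * e (-1) (0, -1) = (2%:~R * e (-2) (-1, -1) + 3%:~R * e (-2) (0, -2))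
  - ((-4)%:~R * e 1 (2, -1) + (-3)%:~R * e 1 (0, 1)) := ce 1 (-2) (0, -1).
have B2 : 3%:~R * e (-1) (1, -2) = (1%:~R * e (-2) (0, -2) + 4%:~R * e (-2) (1, -3))
  - ((-5)%:~R * e 1 (3, -2) + (-2)%:~R * e 1 (1, 0)) := ce 1 (-2) (1, -2).
have C : 4%:~R * e 0 (1, -1) = (3%:~R * e (-2) (-1, -1) + 5%:~R * e (-2) (1, -3))
  - ((-5)%:~R * e 2 (3, -1) + (-3)%:~R * e 2 (1, 1)) := ce 2 (-2) (1, -1).
rewrite (ae (-1) (-1)) (antisym_diag _ (ae 2)) in A1.
rewrite (antisym_diag _ (ae (-2))) in B1 C; rewrite (antisym_diag _ (ae 2)) in C.
have e0p p : e 0 p = 0 := e0 p.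
have e1p p : e 1 p = 0 := e1 p.
rewrite !e0p !e1p in A1 A2 B1 B2 C.
set c := e (-1) (1, -2) in K1 K2 A1 B2 *.
set a := e (-1) (0, -1) in K1 A1 A2 B1.
set b := e (-1) (2, -3) in K2 A2.
set s := e (-2) (0, -2) in B1 B2.
set t := e (-2) (1, -3) in B2 C.
set u := e 2 (2, 0) in A1 A2.
set v := e 2 (3, -1) in A2 C.
have a_eq : a = (-3)%:~R * c by apply: (@eq_of_scaled_sub 1 _ _ _ _ _ K1) => //; ring.
have b_eq : b = 0 by apply: (@eq_of_scaled_sub 4 _ _ _ _ _ K2) => //; ring.
rewrite a_eq in A1 A2 B1; rewrite b_eq in A2.
have s_eq : s = (-3)%:~R * c.
  by apply: (@eq_of_scaled_sub 3 _ _ _ _ _ (esym B1)) => //; ring.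
have v_eq : v = - t by apply: (@eq_of_scaled_sub 5 _ _ _ _ _ (esym C)) => //; ring.
rewrite v_eq in A2.
have u_eq : u = 4%:~R * t + 6%:~R * c.
  by apply: (@eq_of_scaled_sub 1 _ _ _ _ _ (esym A2)) => //; ring.
rewrite s_eq in B2.
have t_eq : 4%:~R * t = 6%:~R * c by apply: (@eq_of_scaled_sub 1 _ _ _ _ _ (esym B2)) => //; ring.
rewrite u_eq t_eq in A1.
have c0 : c = 0 by apply: (@eq_of_scaled_sub 49 _ _ _ _ _ (esym A1)) => //; ring.
have hm1 := cocycle_homog ce e0 (m := -1).
apply: (@actL1_ker_eq0 _ (-1) 0) => //; first exact: cocycle_ker1_m1.
by change (a = 0); rewrite a_eq c0 mulr0.
Qed.

End Rigidity.

Lemma cocycle_eq0 (e : int -> tcoef) : cocycle e -> (forall m, antisym (e m)) ->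
  e 0 =1 \0 -> e 1 =1 \0 -> forall m, e m =1 \0.
Proof.
move=> ce ae e0 e1.
have em1 := cocycle_eq0_m1 ce ae e0 e1.
have em2 := cocycle_eq0_m2 ce ae e0 e1 em1.
pose e' m := reflc (e (- m)).
have ce' : cocycle e' := cocycle_reflc ce.
have ae' m : antisym (e' m) := antisym_reflc (ae (- m)).
have e'0 : e' 0 =1 \0 by move=> p; rewrite /e' /reflc oppr0 e0.
have e'1 : e' 1 =1 \0 by move=> p; apply: em1.
have e'm1 : e' (-1) =1 \0 by move=> p; rewrite /e' /reflc opprK e1.
have e'2 : e' 2 =1 \0 by move=> p; apply: em2.
have e2 : e 2 =1 \0.
  move=> [i j]; rewrite -(opprK i) -(opprK j).
  by have := cocycle_eq0_m2 ce' ae' e'0 e'1 e'm1 (- i, - j); rewrite /e' /reflc opprK.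
move=> m; have [hm|hm] := lerP 1 m; first exact: cocycle_eq0_ge.
have [->//|m0] := eqVneq m 0.
move=> [i j]; rewrite -(opprK m) -(opprK i) -(opprK j).
have hm' : 1 <= - m by lia.
by have := cocycle_eq0_ge ce' e'1 e'2 hm' (- i, - j); rewrite /e' /reflc.
Qed.

Definition prim0 (f : tcoef) (p : int * int) : CC :=
  if p.1 + p.2 == 0 then 0 else - f p / (p.1 + p.2)%:~R.

Lemma antisym_prim0 (f : tcoef) : antisym f -> antisym (prim0 f).
Proof.
move=> af i j; rewrite /prim0 /= addrC.
by case: eqP => _; [rewrite oppr0 | rewrite af; ring].
Qed.

Lemma actL0_prim0 (f : tcoef) p : p.1 + p.2 != 0 -> actL 0 (prim0 f) p = f p.
Proof.
move=> p0; rewrite actL0 /prim0 (negbTE p0).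
by field; rewrite -intrD intr_eq0.
Qed.

Lemma cocycle_homog0_eq0 (D : int -> tcoef) : cocycle D -> antisym (D 0) ->
  homog 0 (D 0) -> D 0 =1 \0.
Proof.
move=> cD aD0 hD0; apply: (@actL1_ker_eq0 _ 0 0) => //; last exact: (antisym_diag _ aD0).
move=> [i j]; have [/eqP hij|hij] := boolP (i + j == 1); last exact: (homog_actL (m := 1) hD0).
have E : 1%:~R * D 1 (i, j) = actL 1 (D 0) (i, j) - actL 0 (D 1) (i, j) := cD 1 0 (i, j).
by apply: (@eq_of_scaled_sub 1 _ _ _ _ _ (esym E)) => //; rewrite actL0 /= hij; ring.
Qed.

Section Weight1Primitive.

Variable d : tcoef.

(* [prim1_int i] is the coefficient of L_i (x) L_(-i) in a weight-zero
   preimage of [d] under L_1: the recursion [prim1_natS] determines it for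
   i >= 0, and it is extended to negative i as an odd function. *)
Fixpoint prim1_nat (n : nat) : CC :=
  if n is n'.+1 then (d (n'.+1%:Z, - n'%:Z) - (1 - n'%:Z)%:~R * prim1_nat n') / n'.+2%:R
  else 0.

Definition prim1_int (i : int) : CC :=
  match i with Posz n => prim1_nat n | Negz n => - prim1_nat n.+1 end.

Definition prim1 (p : int * int) : CC := if p.1 + p.2 == 0 then prim1_int p.1 else 0.

Lemma prim1_natS n :
  (1 - n%:Z)%:~R * prim1_nat n + n.+2%:R * prim1_nat n.+1 = d (n.+1%:Z, - n%:Z).
Proof. by rewrite /=; field; rewrite -natrD pnatr_eq0. Qed.

Lemma prim1_intN i : prim1_int (- i) = - prim1_int i.
Proof. by case: i => [[|n]|n] /=; rewrite ?oppr0 ?opprK. Qed.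

Hypothesis ad : antisym d.

Lemma prim1_int_eq i :
  (2 - i)%:~R * prim1_int (i - 1) + (1 + i)%:~R * prim1_int i = d (i, 1 - i).
Proof.
have [hi|hi] := lerP 1 i.
  have [n ->] : exists n : nat, i = n.+1 by exists `|i - 1|%N; lia.
  have -> : n.+1%:Z - 1 = n by lia.
  have -> : 1 - n.+1%:Z = - n%:Z by lia.
  by rewrite -prim1_natS /=; ring.
have [n ->] : exists n : nat, i = - n%:Z by exists `|i|%N; lia.
have -> : - n%:Z - 1 = - n.+1%:Z by lia.
have -> : 1 - - n%:Z = n.+1 by lia.
by rewrite !prim1_intN ad -prim1_natS /=; ring.
Qed.

Lemma antisym_prim1 : antisym prim1.
Proof.
move=> i j; rewrite /prim1 /= addrC.
case: eqP => [ij|_]; last by rewrite oppr0.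
by rewrite (_ : i = - j) ?prim1_intN ?opprK //; lia.
Qed.

Lemma homog_prim1 : homog 0 prim1.
Proof. by move=> p /negbTE p0; rewrite /prim1 p0. Qed.

Lemma actL1_prim1 : homog 1 d -> actL 1 prim1 =1 d.
Proof.
move=> hd [i j]; have [/eqP hij|hij] := boolP (i + j == 1); last first.
  by rewrite hd // (homog_actL (m := 1) homog_prim1).
have -> : j = 1 - i by lia.
have d1 : i - 1 + (1 - i) == 0 by apply/eqP; lia.
have d2 : i + (1 - i - 1) == 0 by apply/eqP; lia.
have e2 : 2 * 1 - (1 - i) = 1 + i by lia.
by rewrite -prim1_int_eq /actL /prim1 /= d1 d2 e2.
Qed.

End Weight1Primitive.

Lemma cocycle_reduce0 (D : int -> tcoef) : cocycle D -> (forall m, antisym (D m)) ->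
  exists2 R, antisym R & D 0 =1 actL 0 R.
Proof.
move=> cD aD; have aR := antisym_prim0 (aD 0).
exists (prim0 (D 0)) => // p.
have E0 : subcob D (prim0 (D 0)) 0 =1 \0.
  apply: cocycle_homog0_eq0; first exact: cocycle_subcob.
    exact: antisym_subcob.
  by move=> q q0; rewrite /subcob actL0_prim0 ?subrr.
by apply/eqP; rewrite -subr_eq0; apply/eqP; apply: E0.
Qed.

Lemma cocycle_reduce1 (D : int -> tcoef) : cocycle D -> (forall m, antisym (D m)) ->
  D 0 =1 \0 -> exists2 R, antisym R & D 0 =1 actL 0 R /\ D 1 =1 actL 1 R.
Proof.
move=> cD aD D0; exists (prim1 (D 1)); first exact: antisym_prim1.
split=> p; last by rewrite actL1_prim1 //; apply: cocycle_homog.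
rewrite D0 actL0 /=; have [p0|p0] := eqVneq (p.1 + p.2) 0.
  by rewrite p0 mulr0z oppr0 mul0r.
by rewrite homog_prim1 // mulr0.
Qed.

Lemma cocycle_coboundary (D : int -> tcoef) : cocycle D -> (forall m, antisym (D m)) ->
  exists2 R, antisym R & forall m, D m =1 actL m R.
Proof.
move=> cD aD.
have [R0 aR0 DR0] := cocycle_reduce0 cD aD.
have cD' := cocycle_subcob R0 cD.
have aD' m := antisym_subcob (aD m) aR0.
have D'0 : subcob D R0 0 =1 \0 by move=> p; rewrite /subcob DR0 subrr.
have [R1 aR1 [D'R0 D'R1]] := cocycle_reduce1 cD' aD' D'0.
have e0 : subcob (subcob D R0) R1 0 =1 \0 by move=> p; rewrite /subcob -D'R0 subrr.
have e1 : subcob (subcob D R0) R1 1 =1 \0 by move=> p; rewrite /subcob -D'R1 subrr.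
have E := cocycle_eq0 (cocycle_subcob R1 cD') (fun m => antisym_subcob (aD' m) aR1) e0 e1.
exists (fun p => R0 p + R1 p) => [|m p]; first exact: antisymD.
by rewrite actLD; apply/eqP; rewrite -subr_eq0 opprD addrA; apply/eqP; apply: E.
Qed.

Definition outside (N : int) (p : int * int) := (N < `|p.1|) || (N < `|p.2|).

(* The three identities determine the diagonal coefficient [c]:
   12 c = (4 - i) (i E1 - (2 - i) E2) + (2 - i) (3 - i) E3. *)
Lemma actL_diag_eq0 (R : tcoef) i :
  actL 1 R (i, 1 - i) = 0 -> actL 1 R (i - 1, 2 - i) = 0 -> actL 2 R (i, 2 - i) = 0 ->
  R (i, - i) = 0.
Proof.
have s1 : 1 - i - 1 = - i by lia.
have s2 : i - 1 - 1 = i - 2 by lia.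
have s3 : 2 - i - 1 = 1 - i by lia.
have s4 : 2 - i - 2 = - i by lia.
rewrite /actL /= s1 s2 s3 s4.
move: (R (i - 2, 2 - i)) (R (i - 1, 1 - i)) (R (i, - i)) => a b c E1 E2 E3.
apply: (@intr_mul_eq0 12) => //.
transitivity ((2 * 2 - i)%:~R * (i%:~R * ((2 * 1 - i)%:~R * b + (2 * 1 - (1 - i))%:~R * c)
   - (2 - i)%:~R * ((2 * 1 - (i - 1))%:~R * a + (2 * 1 - (2 - i))%:~R * b))
   + (2 - i)%:~R * (3 - i)%:~R * ((2 * 2 - i)%:~R * a + (2 * 2 - (2 - i))%:~R * c)).
  by ring.
by rewrite E1 E2 E3; ring.
Qed.

Lemma coboundary_support (R : tcoef) (N : int) :
  (forall m p, m \in [:: 0; 1; 2] -> outside N p -> actL m R p = 0) ->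
  forall p, outside (N + 1) p -> R p = 0.
Proof.
move=> hR [i j]; rewrite /outside /= => out.
have [ij|ij] := eqVneq (i + j) 0; last first.
  apply: (@intr_mul_eq0 (- (i + j))); first by rewrite oppr_eq0.
  have := hR 0 (i, j); rewrite actL0 /= intrN => -> //; rewrite /outside /=; lia.
have -> : j = - i by lia.
by apply: actL_diag_eq0; apply: hR => //; rewrite /outside /=; lia.
Qed.

Lemma sum_mulrb_uniq (V : nmodType) (I : eqType) (r : seq I) (F : I -> V) j :
  uniq r -> \sum_(i <- r) F i *+ (i == j) = if j \in r then F j else 0.
Proof.
move=> ur; have [jr|jr] := boolP (j \in r).
  by rewrite (bigD1_seq j) //= eqxx big1 ?addr0 // => i; case: eqP.
rewrite big1_seq // => i /= ir; case: eqP => // ij.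
by rewrite -ij ir in jr.
Qed.

Section MalgCoefficients.

Variable K : choiceType.
Implicit Types g : {malg CC[K]}.

Lemma sum_msupp_mulrb g (F : K -> CC) q :
  \sum_(k <- msupp g) (g@_k * F k) *+ (k == q) = g@_q * F q.
Proof. by rewrite sum_mulrb_uniq ?fset_uniq //; case: msuppP => // _; rewrite mul0r. Qed.

Lemma malgU_scale (c : CC) (k : K) : << c *g k >> = c *: << k >> :> {malg CC[K]}.
Proof. by apply/malgP => k'; rewrite mcoeffZ !mcoeffU mulr_natr. Qed.

Lemma sum_msupp_fsubset (V : lmodType CC) g (d : {fset K}) (F : K -> V) :
  (msupp g `<=` d)%fset ->
  \sum_(k <- msupp g) g@_k *: F k = \sum_(k <- d) g@_k *: F k.
Proof. by move=> gd; apply: big_fset_incl => // k _ /mcoeff_outdom ->; rewrite scale0r. Qed.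

Lemma sum_msupp_linear (V : lmodType CC) (F : K -> V) c g h :
  \sum_(k <- msupp (c *: g + h)) (c *: g + h)@_k *: F k =
  c *: \sum_(k <- msupp g) g@_k *: F k + \sum_(k <- msupp h) h@_k *: F k.
Proof.
pose d := (msupp g `|` msupp h)%fset.
rewrite !(@sum_msupp_fsubset _ _ d) ?fsubsetUl ?fsubsetUr //; last first.
  exact: fsubset_trans (msuppD_le _ _) (fsetSU _ (msuppZ_le _ _)).
rewrite scaler_sumr -big_split; apply: eq_bigr => k _.
by rewrite mcoeffD mcoeffZ scalerDl scalerA.
Qed.

Lemma linear_malg_eq (V : lmodType CC) (f g : {malg CC[K]} -> V) :
  linear f -> linear g -> (forall k, f << k >> = g << k >>) -> f =1 g.
Proof.
move=> lf lg fg x.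
pose F : {linear {malg CC[K]} -> V} := HB.pack f (GRing.isLinear.Build _ _ _ _ f lf).
pose G : {linear {malg CC[K]} -> V} := HB.pack g (GRing.isLinear.Build _ _ _ _ g lg).
rewrite -[f x]/(F x) -[g x]/(G x) (monalgE x) !linear_sum; apply: eq_bigr => k _.
by rewrite malgU_scale !linearZ /= fg.
Qed.

End MalgCoefficients.

Lemma mcoeffL m k : (L m)@_k = (m == k)%:R.
Proof. exact: mcoeffU. Qed.

Lemma msuppL m : msupp (L m) = [fset m]%fset.
Proof. by rewrite /L msuppU oner_eq0. Qed.

Lemma mcoeff_tensor (a b : Witt) p : (tensor a b)@_p = a@_p.1 * b@_p.2.
Proof.
case: p => i j; rewrite raddf_sum /=.
have E m n : (<< a@_m * b@_n *g (m, n) >> : Tens)@_(i, j) =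
    (b@_n * (a@_m *+ (m == i))) *+ (n == j).
  by rewrite mcoeffU xpair_eqE; case: eqP; case: eqP; rewrite /= ?mulr0n ?mulr1n ?mulr0 // mulrC.
under eq_bigr => m _ do rewrite raddf_sum (eq_bigr _ (fun n _ => E m n)) sum_msupp_mulrb.
under eq_bigr => m _ do rewrite mulrnAr mulrC.
by rewrite sum_msupp_mulrb.
Qed.

(* The rewrites below are confined to one side of the goal: unifying two
   distinct elements of a monoid algebra unfolds its operations and is very slow. *)
Lemma tensor_linearl (b : Witt) : linear (tensor^~ b).
Proof.
move=> c a a'; apply/malgP => p.
rewrite [LHS]mcoeff_tensor [RHS]mcoeffD [in RHS]mcoeffZ.
rewrite [X in _ = _ * X + _]mcoeff_tensor [X in _ = _ + X]mcoeff_tensor.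
by rewrite mcoeffD mcoeffZ mulrDl mulrA.
Qed.

Lemma tensor_linearr (a : Witt) : linear (tensor a).
Proof.
move=> c b b'; apply/malgP => p.
rewrite [LHS]mcoeff_tensor [RHS]mcoeffD [in RHS]mcoeffZ.
rewrite [X in _ = _ * X + _]mcoeff_tensor [X in _ = _ + X]mcoeff_tensor.
by rewrite mcoeffD mcoeffZ mulrDr mulrCA.
Qed.

Lemma bracketLl m y :
  bracket (L m) y = \sum_(n <- msupp y) (y@_n * (m - n)%:~R) *: L (m + n).
Proof.
rewrite /bracket msuppL big_seq_fset1; apply: eq_bigr => n _.
by rewrite mcoeffL eqxx mul1r.
Qed.

Lemma bracketLL m n : bracket (L m) (L n) = (m - n)%:~R *: L (m + n).
Proof. by rewrite bracketLl msuppL big_seq_fset1 mcoeffL eqxx mul1r. Qed.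

Lemma bracket_linearl (y : Witt) : linear (bracket^~ y).
Proof.
have bE x : bracket x y = \sum_(m <- msupp x) x@_m *: bracket (L m) y.
  rewrite {1}/bracket; apply: eq_bigr => m _; rewrite bracketLl scaler_sumr.
  by apply: eq_bigr => n _; rewrite scalerA mulrA.
by move=> c x x'; rewrite !bE sum_msupp_linear.
Qed.

(* Stated in an abstract module: rewriting in [Tens] itself is very slow. *)
Lemma scalerDACA (V : lmodType CC) (e c : CC) (u u' v v' : V) :
  e *: (c *: u + u' + (c *: v + v')) = c *: (e *: (u + v)) + e *: (u' + v').
Proof. by rewrite !scalerDr !scalerA mulrC addrACA. Qed.

Lemma act_linear (t : Tens) : linear (act^~ t).
Proof.
move=> c x x'; rewrite /act scaler_sumr -big_split; apply: eq_bigr => p _ /=.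
rewrite (bracket_linearl (L p.1)) (bracket_linearl (L p.2)) tensor_linearl tensor_linearr.
exact: scalerDACA.
Qed.

Lemma mcoeff_tensorZl (c : CC) a b p : (tensor (c *: L a) (L b))@_p = c *+ ((a, b) == p).
Proof.
case: p => i j; rewrite mcoeff_tensor /= mcoeffZ mcoeffL mcoeffL xpair_eqE.
by case: eqP; case: eqP; rewrite /= ?mulr0 ?mulr1.
Qed.

Lemma mcoeff_tensorZr (c : CC) a b p : (tensor (L a) (c *: L b))@_p = c *+ ((a, b) == p).
Proof.
case: p => i j; rewrite mcoeff_tensor /= mcoeffZ mcoeffL mcoeffL xpair_eqE.
by case: eqP; case: eqP; rewrite /= ?mulr0 ?mul0r ?mulr1 ?mul1r.
Qed.

Lemma mcoeff_actL m (t : Tens) p : (act (L m) t)@_p = actL m (fun q => t@_q) p.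
Proof.
case: p => i j; rewrite raddf_sum /actL /=.
have E q : (t@_q *: (tensor (bracket (L m) (L q.1)) (L q.2)
      + tensor (L q.1) (bracket (L m) (L q.2))))@_(i, j) =
    (t@_q * (m - q.1)%:~R) *+ (q == (i - m, j)) + (t@_q * (m - q.2)%:~R) *+ (q == (i, j - m)).
  case: q => a b /=; rewrite !bracketLL mcoeffZ mcoeffD mcoeff_tensorZl mcoeff_tensorZr.
  rewrite mulrDr !mulrnAr !xpair_eqE.
  have -> : (m + a == i) = (a == i - m) by apply/eqP/eqP; lia.
  by have -> : (m + b == j) = (b == j - m) by apply/eqP/eqP; lia.
rewrite (eq_bigr _ (fun q _ => E q)) big_split /= !sum_msupp_mulrb /=.
have -> : m - (i - m) = 2 * m - i by lia.
have -> : m - (j - m) = 2 * m - j by lia.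
by rewrite mulrC [_ * t@_(i, j - m)]mulrC.
Qed.

Lemma mcoeff_wedge (a b : Witt) p : (wedge a b)@_p = a@_p.1 * b@_p.2 - b@_p.1 * a@_p.2.
Proof. by rewrite mcoeffB; congr (_ - _); apply: mcoeff_tensor. Qed.

Lemma mcoeff_wedgeZ (c : CC) a b p :
  (wedge (c *: L a) (L b))@_p = c *+ ((a, b) == p) - c *+ ((b, a) == p).
Proof. by rewrite mcoeffB mcoeff_tensorZl mcoeff_tensorZr. Qed.

Lemma ext2_antisym (t : Tens) : in_ext2 t -> antisym (fun p => t@_p).
Proof.
case=> s -> i j; rewrite !raddf_sum; apply: eq_bigr => q _ /=.
by rewrite !mcoeff_wedge; ring.
Qed.

Lemma cocycle_mcoeff (delta : {linear Witt -> Tens}) :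
  (forall x y, delta (bracket x y) = act x (delta y) - act y (delta x)) ->
  cocycle (fun m p => (delta (L m))@_p).
Proof.
move=> cdelta m n p.
rewrite -(mcoeff_actL m) -(mcoeff_actL n) -mcoeffB -cdelta bracketLL.
by rewrite [in RHS]linearZ [RHS]mcoeffZ.
Qed.

Lemma outside_notin (s : seq (int * int)) :
  exists2 N, 0 <= N & forall p, outside N p -> p \notin s.
Proof.
elim: s => [|q s [N N0 HN]]; first by exists 0.
exists (N + `|q.1| + `|q.2|) => [|p out]; first lia.
rewrite in_cons negb_or HN ?andbT; last by move: out; rewrite /outside; lia.
by apply/eqP => pq; move: out; rewrite pq /outside; lia.
Qed.

Lemma tens_support_bound (ts : seq Tens) :
  exists2 N, 0 <= N & forall t p, t \in ts -> outside N p -> t@_p = 0.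
Proof.
have [N N0 HN] := outside_notin (flatten [seq msupp t : seq _ | t <- ts]).
exists N => // t p tts out; apply: mcoeff_outdom; apply: contra (HN p out) => pt.
by apply/flatten_mapP; exists t.
Qed.

Definition int_range (N : int) : seq int := [seq k%:Z - N | k <- iota 0 (`|N|.*2.+1)].

Lemma int_range_uniq N : uniq (int_range N).
Proof. by rewrite map_inj_uniq ?iota_uniq // => a b; lia. Qed.

Lemma mem_int_range N i : 0 <= N -> (i \in int_range N) = (`|i| <= N).
Proof.
move=> N0; apply/mapP/idP => [[k]|hi]; first by rewrite mem_iota => hk ->; lia.
by exists (absz (i + N)); [rewrite mem_iota; lia | lia].
Qed.

Definition int_box (N : int) : seq (int * int) :=
  [seq (a, b) | a <- int_range N, b <- int_range N].

Lemma int_box_uniq N : uniq (int_box N).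
Proof. by apply: allpairs_uniq; rewrite ?int_range_uniq // => -[a b] [c d] _ _ [-> ->]. Qed.

Lemma mem_int_box N p : 0 <= N -> (p \in int_box N) = ~~ outside N p.
Proof.
case: p => a b N0; apply/allpairsP/idP => [[[a' b'] [/= ha hb [-> ->]]]|hab].
  by move: ha hb; rewrite /outside !mem_int_range //=; lia.
by exists (a, b); rewrite !mem_int_range //; split=> //; move: hab; rewrite /outside /=; lia.
Qed.

Lemma ext2_of_antisym (R : tcoef) (N : int) : 0 <= N -> antisym R ->
  (forall p, outside N p -> R p = 0) -> exists2 r, in_ext2 r & forall p, r@_p = R p.
Proof.
move=> N0 aR hR.
exists (\sum_(q <- int_box N) wedge ((R q / 2) *: L q.1) (L q.2)).
  by exists [seq ((R q / 2) *: L q.1, L q.2) | q <- int_box N]; rewrite big_map.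
case=> i j; rewrite raddf_sum /=.
have E q : (wedge ((R q / 2) *: L q.1) (L q.2))@_(i, j) =
    (R q / 2) *+ (q == (i, j)) - (R q / 2) *+ (q == (j, i)).
  case: q => a b; rewrite mcoeff_wedgeZ; congr (_ - _ *+ _).
  by rewrite !xpair_eqE andbC.
rewrite (eq_bigr _ (fun q _ => E q)) sumrB !sum_mulrb_uniq ?int_box_uniq //.
rewrite !mem_int_box // /outside /= orbC.
case: ifP => [_|/negbT]; first by rewrite (aR j i) mulNr opprK -splitr.
by rewrite negbK orbC => out; rewrite hR ?subrr.
Qed.

Theorem theorem1 :
  forall delta : {linear Witt -> Tens},
    (forall x : Witt, in_ext2 (delta x)) ->
    (forall x y : Witt,
        delta (bracket x y) = act x (delta y) - act y (delta x)) ->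
    exists r : Tens, in_ext2 r /\ (forall x : Witt, delta x = act x r).
Proof.
move=> delta ext2 cdelta.
have [R aR DR] := cocycle_coboundary (cocycle_mcoeff cdelta) (fun m => ext2_antisym (ext2 (L m))).
have [N N0 HN] := tens_support_bound [seq delta (L m) | m <- [:: 0; 1; 2]].
have RN : forall p, outside (N + 1) p -> R p = 0.
  apply: coboundary_support => m p mP out; rewrite -DR.
  by apply: HN out; exact: (map_f (fun k => delta (L k)) mP).
have [|r r2 rR] := ext2_of_antisym _ aR RN; first by rewrite addr_ge0.
exists r; split => // x.
apply: (linear_malg_eq (@linearP _ _ _ _ delta) (act_linear r)) => m.
apply/malgP => p; rewrite mcoeff_actL; transitivity (actL m R p); first exact: DR.
by apply: actL_ext => q; rewrite rR.
Qed.
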